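(* Let $t\ge1$, $i\ge0$ integers, let $h:\mathbb{F}_{2^t}\to\mathbb{F}_{2^t}$ be any function, and let $f:\mathbb{F}_{2^t}\times\mathbb{F}_{2^t}\to\mathbb{F}_2$ be $f(x,y)=Tr_1^t(xy^{2^i}+h(y))$. Then $f$ is negabent if and only if $y\mapsto Tr_1^t(h(y))$ is a bent function on $\mathbb{F}_{2^t}$.
   Context: $Tr_1^t$ is the absolute trace of $\mathbb{F}_{2^t}$. Fix a self-dual basis $\{\alpha_1,\dots,\alpha_t\}$ of $\mathbb{F}_{2^t}$ over $\mathbb{F}_2$ ($Tr_1^t(\alpha_i\alpha_j)=\delta_{ij}$) and identify $\mathbb{F}_{2^t}\times\mathbb{F}_{2^t}$ with $\mathbb{F}_2^{2t}$ via coordinates; let $wt(x,y)$ be the number of nonzero coordinates. $g:\mathbb{F}_{2^t}\times\mathbb{F}_{2^t}\to\mathbb{F}_2$ is negabent if $\left|\sum_{(x,y)}(-1)^{g(x,y)+Tr_1^t(ax)+Tr_1^t(by)}\,\mathrm{i}^{wt(x,y)}\right|=2^{t}$ for all $(a,b)$ ($\mathrm{i}=\sqrt{-1}$). A function $u:\mathbb{F}_{2^t}\to\mathbb{F}_2$ is bent if $\left|\sum_{y}(-1)^{u(y)+Tr_1^t(\mu y)}\right|=2^{t/2}$ for all $\mu\in\mathbb{F}_{2^t}$ (equivalently, $\sum_y(-1)^{u(y)+u(y+b)}=0$ for all $b\neq0$). *)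

From HB Require Import structures.
From mathcomp Require Import all_boot all_order all_algebra all_field.
Set Implicit Arguments. Unset Strict Implicit. Unset Printing Implicit Defensive.
Import Order.TTheory GRing.Theory Num.Theory.
Local Open Scope ring_scope.

(* F plays the role of F_{2^t} (a finite field with #|F| = 2^t).
   F_2 is represented by bool, with addition = xor (+). *)

(* Absolute trace Tr_1^t : F_{2^t} -> F_{2^t} (values lie in the prime field). *)
Definition Tr (F : finFieldType) (t : nat) (x : F) : F :=
  \sum_(k < t) x ^+ (2 ^ k).

Definition trb (F : finFieldType) (t : nat) (x : F) : bool := Tr t x != 0.

Definition self_dual (F : finFieldType) (t : nat) (alpha : 'I_t -> F) : Prop :=
  forall j k : 'I_t, Tr t (alpha j * alpha k) = (j == k)%:R.

Definition coords (F : finFieldType) (t : nat) (alpha : 'I_t -> F) (x : F)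
  : option {ffun 'I_t -> bool} :=
  [pick c : {ffun 'I_t -> bool} | x == \sum_(k < t) (c k)%:R * alpha k].

Definition wt1 (F : finFieldType) (t : nat) (alpha : 'I_t -> F) (x : F) : nat :=
  if coords alpha x is Some c then #|[set k | c k]| else 0.

Definition wt2 (F : finFieldType) (t : nat) (alpha : 'I_t -> F) (x y : F) : nat :=
  (wt1 alpha x + wt1 alpha y)%N.

Definition sgn (b : bool) : algC := (-1) ^+ b.

Definition negabent (F : finFieldType) (t : nat) (alpha : 'I_t -> F)
  (g : F -> F -> bool) : Prop :=
  forall a b : F,
    `| \sum_(x : F) \sum_(y : F)
         sgn (g x y (+) trb t (a * x) (+) trb t (b * y)) * 'i ^+ (wt2 alpha x y) |
    = 2%:R ^+ t.

Definition bent (F : finFieldType) (t : nat) (u : F -> bool) : Prop :=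
  forall mu : F,
    `| \sum_(y : F) sgn (u y (+) trb t (mu * y)) | = sqrtC (2%:R ^+ t).

From mathcomp Require Import all_boot all_order all_algebra all_field.
From mathcomp Require Import ring.
Set Implicit Arguments. Unset Strict Implicit. Unset Printing Implicit Defensive.
Import Order.TTheory GRing.Theory Num.Theory.
Local Open Scope ring_scope.

(* Let chi x = (-1)^Tr(x) and psi x = i^wt(x).  Because the basis is
   self-dual, the coordinates of x are the traces Tr (alpha_k x), which gives
   psi (y + z) = psi y * psi z * chi (y z).  Summing the nega-Hadamard
   transform of f over x first, this shift rule turns the inner sum into
   psi (y^(2^i) + a)^-1 times a Gauss sum of modulus 2^(t/2); what remains
   of psi, namely y |-> psi y / psi (y^(2^i)), is an additive character, hence
   of the form chi (d * _).  So every nega-Hadamard coefficient of f is, up to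
   a unimodular factor, 2^(t/2) times a Walsh coefficient of Tr o h, and for
   a = 0 every Walsh coefficient occurs. *)

Definition additive_char (V : zmodType) (R : pzRingType) (lam : V -> R) :=
  {morph lam : x y / x + y >-> x * y} /\ lam 0 = 1.

Lemma additive_charM (V : zmodType) (R : comPzRingType) (l1 l2 : V -> R) :
  additive_char l1 -> additive_char l2 -> additive_char (fun x => l1 x * l2 x).
Proof.
move=> [l1D l1_0] [l2D l2_0]; split=> [x y|]; last by rewrite l1_0 l2_0 mulr1.
by rewrite l1D l2D mulrACA.
Qed.

Lemma sum_morph_eq0 (V : finZmodType) (R : idomainType) (lam : V -> R) w :
  {morph lam : x y / x + y >-> x * y} -> lam w != 1 -> \sum_x lam x = 0.
Proof.
move=> lamD lamw_neq1.
have shift : \sum_x lam x = lam w * \sum_x lam x.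
  rewrite mulr_sumr (reindex_inj (addIr w)) /=.
  by apply: eq_bigr => x _; rewrite lamD mulrC.
have : (1 - lam w) * \sum_x lam x == 0 by rewrite mulrBl mul1r -shift subrr.
by rewrite mulf_eq0 subr_eq0 eq_sym (negbTE lamw_neq1) => /eqP.
Qed.

Lemma sgn_addb a b : sgn (a (+) b) = sgn a * sgn b.
Proof. by case: a; case: b; rewrite /sgn /= ?mulr1 ?mul1r ?mulrNN ?mulr1. Qed.

Lemma sgnK b : sgn b * sgn b = 1.
Proof. by case: b; rewrite /sgn /= ?mulr1 ?mulrNN ?mulr1. Qed.

Lemma expCi_addb p q : ('i : algC) ^+ (p (+) q) = 'i ^+ p * 'i ^+ q * sgn (p && q).
Proof.
by case: p; case: q; rewrite /sgn /= ?expr0 ?expr1 ?mulr1 ?mul1r ?mulCii ?mulrN1 ?opprK.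
Qed.

Section Trace.

Variables (t : nat) (F : finFieldType).
Hypothesis cardF : #|F| = (2 ^ t)%N.

Lemma pchar2_F : 2 \in [pchar F].
Proof. exact: card_finPcharP cardF _. Qed.

Lemma exprD_pow2 k (x y : F) : (x + y) ^+ (2 ^ k) = x ^+ (2 ^ k) + y ^+ (2 ^ k).
Proof. by apply: exprDn_pchar; rewrite (eq_pnat _ (pcharf_eq pchar2_F)) pnatX pnat_id. Qed.

Lemma TrD (x y : F) : Tr t (x + y) = Tr t x + Tr t y.
Proof. by rewrite /Tr -big_split; apply: eq_bigr => k _; rewrite exprD_pow2. Qed.

Lemma Tr0 : Tr t (0 : F) = 0.
Proof. by rewrite /Tr big1 // => k _; rewrite expr0n expn_eq0. Qed.

Lemma Tr_sum (I : finType) (f : I -> F) : Tr t (\sum_i f i) = \sum_i Tr t (f i).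
Proof. exact: (big_morph (Tr t) TrD Tr0). Qed.

Lemma Tr_bool_mul (b : bool) (x : F) : Tr t (b%:R * x) = b%:R * Tr t x.
Proof. by case: b; rewrite ?mul1r ?mul0r ?Tr0. Qed.

Lemma Tr_exp2 (x : F) : Tr t (x ^+ 2) = Tr t x.
Proof.
have x_fixed : x ^+ (2 ^ t) = x by rewrite -cardF expf_card.
have sum_first : \sum_(k < t.+1) x ^+ (2 ^ k) = x + Tr t (x ^+ 2).
  rewrite big_ord_recl expn0 expr1; congr (_ + _).
  by apply: eq_bigr => k _; rewrite -exprM expnS.
have sum_last : \sum_(k < t.+1) x ^+ (2 ^ k) = Tr t x + x.
  by rewrite big_ord_recr /= x_fixed.
by apply: (addrI x); rewrite -sum_first sum_last addrC.
Qed.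

Lemma Tr_exp_pow2 k (x : F) : Tr t (x ^+ (2 ^ k)) = Tr t x.
Proof. by elim: k => [|k IHk]; rewrite ?expr1 // expnSr exprM Tr_exp2. Qed.

Lemma Tr_eq01 (x : F) : (Tr t x == 0) || (Tr t x == 1).
Proof.
have Tr_idem : Tr t x ^+ 2 = Tr t x.
  rewrite -{2}(Tr_exp2 x) /Tr (big_morph _ (exprD_pow2 1) (expr0n _ 2)).
  by apply: eq_bigr => k _; rewrite -!exprM mulnC.
have : Tr t x * (Tr t x - 1) == 0 by rewrite mulrBr mulr1 -expr2 Tr_idem subrr.
by rewrite mulf_eq0 subr_eq0.
Qed.

Lemma trbD (x y : F) : trb t (x + y) = trb t x (+) trb t y.
Proof.
rewrite /trb TrD.
case/orP: (Tr_eq01 x) => /eqP ->; case/orP: (Tr_eq01 y) => /eqP ->;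
  by rewrite ?addr0 ?add0r ?(addrr_pchar2 pchar2_F) ?eqxx ?oner_neq0.
Qed.

Lemma trb0 : trb t (0 : F) = false.
Proof. by rewrite /trb Tr0 eqxx. Qed.

Definition chi (x : F) : algC := sgn (trb t x).

Lemma chiD : {morph chi : x y / x + y >-> x * y}.
Proof. by move=> x y; rewrite /chi trbD sgn_addb. Qed.

Lemma chi0 : chi 0 = 1.
Proof. by rewrite /chi trb0. Qed.

Lemma chiK x : chi x * chi x = 1.
Proof. exact: sgnK. Qed.

Lemma chi_neq0 x : chi x != 0.
Proof. by apply: contra_eqN (chiK x) => /eqP->; rewrite mul0r eq_sym oner_eq0. Qed.

Lemma chi_exp_pow2 k x : chi (x ^+ (2 ^ k)) = chi x.
Proof. by rewrite /chi /trb Tr_exp_pow2. Qed.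

Lemma additive_char_chiMl c : additive_char (fun y => chi (c * y)).
Proof. by split=> [x y|]; rewrite ?mulrDr ?chiD // mulr0 chi0. Qed.

Lemma additive_char_chi_frob k c : additive_char (fun y => chi (y ^+ (2 ^ k) * c)).
Proof. by split=> [x y|]; rewrite ?exprD_pow2 ?mulrDl ?chiD // expr0n expn_eq0 mul0r chi0. Qed.

End Trace.

Section SelfDualBasis.

Variables (t : nat) (F : finFieldType) (alpha : 'I_t -> F).
Hypotheses (cardF : #|F| = (2 ^ t)%N) (t_gt0 : (0 < t)%N).
Hypothesis alpha_self_dual : self_dual alpha.

Local Notation chi := (@chi t F).

Lemma sum_chiMr (y : F) : \sum_d chi (d * y) = if y == 0 then #|F|%:R else 0.
Proof.
have [->|/eqP y_neq0] := eqP.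
  by under eq_bigr do rewrite mulr0 chi0; rewrite sumr_const.
pose w := alpha (Ordinal t_gt0) * alpha (Ordinal t_gt0).
have chi_w : chi w = -1 by rewrite /chi /trb alpha_self_dual eqxx oner_neq0 /sgn expr1.
apply: (@sum_morph_eq0 _ _ (fun d => chi (d * y)) (w / y)).
  by move=> a b; rewrite mulrDl chiD.
rewrite divfK // chi_w -subr_eq0 -opprD oppr_eq0.
by rewrite -[1 + 1]/(2%:R) pnatr_eq0.
Qed.

Lemma additive_char_dual (lam : F -> algC) :
  additive_char lam -> exists d, forall y, lam y = chi (d * y).
Proof.
move=> [lamD lam0].
pose T d := \sum_y lam y * chi (d * y).
have sum_T : \sum_d T d = #|F|%:R.
  rewrite /T exchange_big /=.
  under eq_bigr do rewrite -mulr_sumr sum_chiMr.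
  rewrite (bigD1 0) //= eqxx lam0 mul1r big1 ?addr0 // => y /negbTE ->.
  by rewrite mulr0.
have [d Td_neq0] : exists d, T d != 0.
  apply/existsP; apply: contraT => /existsPn T0.
  have : (#|F|%:R : algC) != 0 by rewrite pnatr_eq0 cardF expn_eq0.
  by rewrite -sum_T big1 ?eqxx // => d _; apply/eqP; move: (T0 d); rewrite negbK.
exists d => y.
have lam_chi_1 : lam y * chi (d * y) = 1.
  apply/eqP; apply: contraT => neq1; move: Td_neq0.
  rewrite /T (@sum_morph_eq0 _ _ (fun y => lam y * chi (d * y)) y) ?eqxx //.
  by move=> a b /=; rewrite lamD mulrDr (chiD cardF) mulrACA.
by rewrite -[lam y]mulr1 -(chiK t (d * y)) mulrA lam_chi_1 mul1r.
Qed.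

Definition vec (c : {ffun 'I_t -> bool}) : F := \sum_(k < t) (c k)%:R * alpha k.

Lemma trb_alpha_vec j c : trb t (alpha j * vec c) = c j.
Proof.
have Tr_vec : Tr t (alpha j * vec c) = (c j)%:R.
  rewrite /vec mulr_sumr Tr_sum //.
  under eq_bigr do rewrite mulrCA Tr_bool_mul alpha_self_dual.
  rewrite (bigD1 j) //= eqxx mulr1 big1 ?addr0 // => k.
  by rewrite eq_sym => /negbTE ->; rewrite mulr0.
by rewrite /trb Tr_vec; case: (c j); rewrite ?oner_neq0 ?eqxx.
Qed.

Lemma vec_inj : injective vec.
Proof. by move=> c1 c2 E; apply/ffunP => j; rewrite -(trb_alpha_vec j c1) E trb_alpha_vec. Qed.

Lemma self_dual_expansion (x : F) : x = \sum_(k < t) (trb t (alpha k * x))%:R * alpha k.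
Proof.
have : x \in codom vec.
  by apply: (inj_card_onto vec_inj); rewrite card_ffun card_bool card_ord cardF.
by case/codomP => c ->; apply: eq_bigr => k _; rewrite trb_alpha_vec.
Qed.

Lemma wt1E (x : F) : wt1 alpha x = (\sum_(k < t) trb t (alpha k * x)%R)%N.
Proof.
rewrite /wt1 /coords; case: pickP => [c /eqP x_def | no_coords].
  rewrite -sum1_card big_mkcond /=; apply: eq_bigr => k _.
  by rewrite inE x_def -/(vec c) trb_alpha_vec; case: (c k).
have := no_coords [ffun k => trb t (alpha k * x)].
rewrite {1}(self_dual_expansion x).
by under [X in _ == X]eq_bigr do rewrite ffunE; rewrite eqxx.
Qed.

Definition psi (x : F) : algC := 'i ^+ wt1 alpha x.

Lemma chi_mulE (y z : F) :
  chi (y * z) = \prod_(k < t) sgn (trb t (alpha k * y) && trb t (alpha k * z)).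
Proof.
rewrite {1}(self_dual_expansion y) mulr_suml (big_morph chi (chiD cardF) (chi0 _ _)).
by apply: eq_bigr => k _; case: (trb t (alpha k * y)); rewrite ?mul1r ?mul0r ?chi0.
Qed.

Lemma psiD y z : psi (y + z) = psi y * psi z * chi (y * z).
Proof.
rewrite /psi !wt1E !expr_sum chi_mulE -!big_split /=; apply: eq_bigr => k _.
by rewrite mulrDr (trbD cardF) expCi_addb.
Qed.

Lemma psi0 : psi 0 = 1.
Proof. by rewrite /psi wt1E big1 // => k _; rewrite mulr0 trb0. Qed.

Lemma psi_neq0 x : psi x != 0.
Proof. by rewrite /psi expf_neq0 // neq0Ci. Qed.

Lemma norm_psi x : `|psi x| = 1.
Proof. by rewrite /psi normrX normCi expr1n. Qed.

Definition gauss (c : F) : algC := \sum_x chi (c * x) * psi x.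

Lemma gaussE c : gauss c = (psi c)^-1 * gauss 0.
Proof.
apply: (mulfI (psi_neq0 c)); rewrite mulrA divff ?psi_neq0 // mul1r.
rewrite /gauss mulr_sumr [RHS](reindex_inj (addIr c)) /=.
by apply: eq_bigr => x _; rewrite mul0r chi0 mul1r psiD (mulrC x c); ring.
Qed.

Lemma norm_gauss0 : `|gauss 0| = sqrtC (2%:R ^+ t).
Proof.
suff norm2 : `|gauss 0| ^+ 2 = 2%:R ^+ t by rewrite -norm2 sqrCK.
have gauss0E : gauss 0 = \sum_x psi x by apply: eq_bigr => x _; rewrite mul0r chi0 mul1r.
have shift z : gauss 0 * (psi z)^* = \sum_x psi x * chi (z * x).
  rewrite gauss0E mulr_suml (reindex_inj (addIr z)) /=.
  apply: eq_bigr => x _; rewrite psiD (mulrC x z).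
  transitivity (psi x * chi (z * x) * `|psi z| ^+ 2); first by rewrite normCK; ring.
  by rewrite norm_psi expr1n mulr1.
rewrite normCK {2}gauss0E rmorph_sum mulr_sumr.
under eq_bigr do rewrite shift.
rewrite exchange_big /=.
under eq_bigr do rewrite -mulr_sumr sum_chiMr.
rewrite (bigD1 0) //= eqxx psi0 mul1r big1 ?addr0 ?cardF ?natrX // => y /negbTE ->.
by rewrite mulr0.
Qed.

Definition theta (i : nat) (y : F) : algC := psi y / psi (y ^+ (2 ^ i)).

Lemma chiV x : (chi x)^-1 = chi x.
Proof. by rewrite -[LHS]mulr1 -(chiK t x) mulKf ?chi_neq0. Qed.

(* The cross terms chi (y z) of psi (y + z) and of psi (y^(2^i) + z^(2^i))
   agree because the trace is Frobenius invariant. *)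
Lemma additive_char_theta i : additive_char (theta i).
Proof.
split=> [y z|]; last first.
  by rewrite /theta expr0n expn_eq0 /= psi0 divr1.
rewrite /theta (exprD_pow2 cardF) !psiD -exprMn (chi_exp_pow2 cardF) !invfM chiV.
transitivity (psi y / psi (y ^+ (2 ^ i)) * (psi z / psi (z ^+ (2 ^ i)))
                * (chi (y * z) * chi (y * z))); first by ring.
by rewrite chiK mulr1.
Qed.

Definition walsh (u : F -> bool) (mu : F) : algC :=
  \sum_y sgn (u y (+) trb t (mu * y)).

Definition nega_hadamard (g : F -> F -> bool) (a b : F) : algC :=
  \sum_x \sum_y sgn (g x y (+) trb t (a * x) (+) trb t (b * y)) * 'i ^+ wt2 alpha x y.

Lemma walshE u d : walsh u d = \sum_y sgn (u y) * chi (d * y).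
Proof. by apply: eq_bigr => y _; rewrite sgn_addb. Qed.

Lemma nega_hadamard_quadratic i h a b d :
  (forall y, theta i y * chi (y ^+ (2 ^ i) * a) * chi (b * y) = chi (d * y)) ->
  nega_hadamard (fun x y => trb t (x * y ^+ (2 ^ i) + h y)) a b
    = gauss 0 / psi a * walsh (fun y => trb t (h y)) d.
Proof.
move=> lamE; rewrite /nega_hadamard exchange_big walshE mulr_sumr.
apply: eq_bigr => y _.
transitivity (chi (h y) * chi (b * y) * psi y * gauss (y ^+ (2 ^ i) + a)).
  rewrite /gauss mulr_sumr; apply: eq_bigr => x _.
  rewrite mulrDl (chiD cardF) (mulrC (y ^+ _) x) (trbD cardF) !sgn_addb /wt2 exprD.
  rewrite -/(chi (x * y ^+ (2 ^ i))) -/(chi (h y)) -/(chi (a * x)) -/(chi (b * y)).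
  by rewrite -/(psi x) -/(psi y); ring.
rewrite gaussE psiD !invfM chiV -lamE /theta -/(chi (h y)).
by ring.
Qed.

Lemma norm_nega_hadamard_quadratic i h a b d :
  (forall y, theta i y * chi (y ^+ (2 ^ i) * a) * chi (b * y) = chi (d * y)) ->
  `|nega_hadamard (fun x y => trb t (x * y ^+ (2 ^ i) + h y)) a b|
    = sqrtC (2%:R ^+ t) * `|walsh (fun y => trb t (h y)) d|.
Proof.
move=> lamE; rewrite (nega_hadamard_quadratic h lamE) !normrM normfV norm_psi.
by rewrite invr1 mulr1 norm_gauss0.
Qed.

End SelfDualBasis.

Theorem theorem6 (t i : nat) (F : finFieldType) (HF : #|F| = (2 ^ t)%N)
  (ht : (1 <= t)%N) (alpha : 'I_t -> F) (Halpha : self_dual alpha)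
  (h : F -> F) :
  negabent alpha (fun x y => trb t (x * y ^+ (2 ^ i) + h y))
  <-> bent t (fun y => trb t (h y)).
Proof.
have dual := additive_char_dual HF ht Halpha.
have norm_nega := norm_nega_hadamard_quadratic HF ht Halpha.
have sqrt2t_neq0 : sqrtC (2%:R ^+ t) != 0 :> algC.
  by rewrite sqrtC_eq0 expf_neq0 // pnatr_eq0.
have sqrt2t_sqr : sqrtC (2%:R ^+ t) * sqrtC (2%:R ^+ t) = 2%:R ^+ t :> algC.
  by rewrite -expr2 sqrtCK.
split=> [negabent_f mu | bent_h a b].
- have [d0 thetaE] := dual _ (additive_char_theta HF Halpha i).
  apply: (mulfI sqrt2t_neq0); rewrite sqrt2t_sqr -(norm_nega i h 0 (mu - d0) mu).
    exact: negabent_f.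
  by move=> y; rewrite thetaE mulr0 chi0 mulr1 -(chiD HF) -mulrDl addrC subrK.
- have [d lamE] := dual _ (additive_charM (additive_charM
    (additive_char_theta HF Halpha i) (additive_char_chi_frob HF i a))
    (additive_char_chiMl HF b)).
  by rewrite (norm_nega i h a b d lamE) bent_h sqrt2t_sqr.
Qed.
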